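(* Let $k$ be even, $1\le s\le k-1$, and let $G$ be a $k$-uniform $s$-cycle with $m$ edges and $n=m(k-s)$ vertices, where $k=q(k-s)$ for an odd integer $q$. Then $G$ is odd-bipartite.
   Context: A $k$-uniform $s$-cycle with $m$ edges has vertex set $\mathbb{Z}_n$, $n=m(k-s)$ (vertex $n+i$ identified with $i$), and edges $e_j=\{j(k-s)+1,\ldots,j(k-s)+k\}$, $j=0,\ldots,m-1$; it is assumed that $n\ge 2k-s$. A $k$-uniform hypergraph with $k$ even and vertex set $V$ is odd-bipartite if either it has no edges or there is a partition $V=V_1\cup V_2$ with $V_1,V_2\ne\emptyset$ such that every edge intersects $V_1$ in an odd number of vertices. *)

From mathcomp Require Import all_boot.
Set Implicit Arguments. Unset Strict Implicit. Unset Printing Implicit Defensive.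

(* Vertex set Z_n is represented by 'I_n; vertex x (any nat) is identified
   with x %% n.  Edge e_j = {j(k-s)+1, ..., j(k-s)+k} (mod n). *)
Definition scycle_edge (n k s j : nat) : {set 'I_n} :=
  [set v : 'I_n | [exists t : 'I_k, (j * (k - s) + t.+1) %% n == v]].

Definition scycle_edges (n k s m : nat) : {set {set 'I_n}} :=
  [set scycle_edge n k s j | j : 'I_m].

Definition odd_bipartite (V : finType) (E : {set {set V}}) : Prop :=
  E = set0 \/
  exists V1 : {set V}, V1 != set0 /\ ~: V1 != set0 /\
    forall e, e \in E -> odd #|e :&: V1|.

(* Put d = k - s, so that k = q d and d divides n = m d.  Take V1 to be the
   vertices divisible by d; this is well defined on Z_n because d | n.  Each
   edge consists of k = q d consecutive integers, hence contains exactly q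
   multiples of d, an odd number.  Since k is even and q odd, d >= 2, so both
   0 and 1 show that V1 and its complement are nonempty. *)
From mathcomp Require Import all_boot zify.

Lemma count_dvdn_iota_period d a : 0 < d -> count (dvdn d) (iota a d) = 1.
Proof.
case: d => // d _; elim: a => [|a IH].
  rewrite /= (@eq_in_count _ _ pred0) ?count_pred0 // => x.
  rewrite mem_iota add1n ltnS => /andP[x_gt0 x_le]; apply/negbTE/negP.
  by move=> /(dvdn_leq x_gt0); rewrite ltnNge x_le.
have iota_shift : iota a.+1 d.+1 = iota a.+1 d ++ [:: a.+1 + d].
  by rewrite -[d.+1]addn1 iotaD.
by rewrite iota_shift count_cat addSnnS /= dvdn_addl // addn0 addnC.
Qed.

Lemma count_dvdn_iota d a q : 0 < d -> count (dvdn d) (iota a (q * d)) = q.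
Proof.
move=> d_gt0; elim: q a => [|q IH] a; first by rewrite mul0n.
by rewrite mulSn iotaD count_cat count_dvdn_iota_period // IH.
Qed.

Lemma card_ord_pred k (P : pred nat) : #|[set t : 'I_k | P t]| = count P (iota 0 k).
Proof.
by rewrite -sum1_card big_set /= -(big_mkord P (fun _ => 1)) sum1_count /index_iota subn0.
Qed.

Section ScycleEdge.

Variables (n k s j : nat) (P : pred nat).
Hypotheses (n_gt0 : 0 < n) (k_le_n : k <= n) (P_mod : forall x, P (x %% n) = P x).

Let a := j * (k - s).
Let vertex (t : 'I_k) : 'I_n := Ordinal (ltn_pmod (a + t.+1) n_gt0).

Lemma vertex_inj : injective vertex.
Proof.
move=> t1 t2 /(congr1 val) /= /eqP.
rewrite !addnS -!addSn eqn_modDl !modn_small ?(leq_trans (ltn_ord _)) //.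
by move=> /eqP; apply: val_inj.
Qed.

Lemma scycle_edge_predI :
  scycle_edge n k s j :&: [set v : 'I_n | P v] = vertex @: [set t : 'I_k | P (a + t.+1)].
Proof.
apply/setP => v; rewrite !inE; apply/andP/imsetP.
- case=> /existsP [t /eqP vt] Pv; exists t; first by rewrite inE -P_mod vt.
  by apply: val_inj; rewrite /= -vt.
- case=> t; rewrite inE => Pt ->; split; last by rewrite /= P_mod.
  by apply/existsP; exists t.
Qed.

Lemma card_scycle_edge_predI :
  #|scycle_edge n k s j :&: [set v : 'I_n | P v]| = count P (iota a.+1 k).
Proof.
rewrite scycle_edge_predI card_in_imset; last by move=> ? ? _ _; apply: vertex_inj.
rewrite (card_ord_pred k (fun t => P (a + t.+1))) -[a.+1]addn0 iotaDl count_map.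
by apply: eq_count => t /=; rewrite addnS.
Qed.

End ScycleEdge.

Theorem corollary4p1 (k s m q : nat) :
  ~~ odd k -> 1 <= s -> s <= k - 1 ->
  odd q -> k = q * (k - s) ->
  2 * k - s <= m * (k - s) ->
  odd_bipartite (scycle_edges (m * (k - s)) k s m).
Proof.
move=> even_k s_ge1 s_lt_k odd_q k_eq n_ge.
set d := k - s in k_eq n_ge *; set n := m * d.
have d_gt0 : 0 < d by rewrite /d; lia.
have d_neq1 : d != 1 by apply: contraNneq even_k => d1; rewrite k_eq d1 muln1.
have d_gt1 : 1 < d by rewrite ltn_neqAle eq_sym d_neq1.
have n_gt1 : 1 < n by lia.
have n_gt0 : 0 < n by lia.
have dvd_mod x : (d %| x %% n) = (d %| x) by rewrite /dvdn modn_dvdm // dvdn_mull.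
right; exists [set v : 'I_n | d %| v]; split; [|split].
- by apply/set0Pn; exists (Ordinal n_gt0); rewrite inE dvdn0.
- apply/set0Pn; exists (Ordinal n_gt1); rewrite !inE /=.
  by rewrite dvdn1 neq_ltn d_gt1 orbT.
- move=> e /imsetP [j _ ->].
  rewrite (@card_scycle_edge_predI _ _ _ _ (dvdn d) n_gt0) //; last by lia.
  by rewrite [in iota _ k]k_eq count_dvdn_iota.
Qed.
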